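(* Let $f:\mathbb{Z}^n\to\mathbb{R}\cup\{+\infty\}$ be M-convex with bounded $\operatorname{dom} f$, $\emptyset\neq R\subsetneq N$, and $k$ an integer with $\underline{k}\le k\le\overline{k}$. Let $\hat k<k$ be an integer and $x\in M(\hat k)$. Consider the procedure ConstM-IncSlope$(x)$: set $y:=x$; for each $i\in R$ (each exactly once, arbitrary order) and, for this $i$, for each $j\in N\setminus R$ (each exactly once, arbitrary order), if $f'(y;i,j)=\phi^R(x)$ then set $\lambda:=\min\{k-y(R),\bar c(y;i,j)\}$ and replace $y$ by $y+\lambda(\chi_i-\chi_j)$; finally output $x':=y$. If $x'(R)<k$, then $\phi^R(x')>\phi^R(x)$.
   Context: $N=\{1,\dots,n\}$; $\chi_i\in\{0,1\}^n$ is the $i$-th unit vector; $x(R)=\sum_{i\in R}x(i)$. For $f:\mathbb{Z}^n\to\mathbb{R}\cup\{+\infty\}$, $\operatorname{dom} f=\{x\in\mathbb{Z}^n: f(x)<+\infty\}$. $f$ is M-convex if $\operatorname{dom} f\neq\emptyset$ and for all $x,y\in\operatorname{dom} f$ and every $i$ with $x(i)>y(i)$ there is $j$ with $x(j)<y(j)$ such that $f(x)+f(y)\ge f(x-\chi_i+\chi_j)+f(y+\chi_i-\chi_j)$. $f'(x;i,j)=f(x+\chi_i-\chi_j)-f(x)$ (possibly $+\infty$), $\phi^R(x)=\min_{i\in R,\,j\in N\setminus R}f'(x;i,j)$, and $\bar c(y;i,j)=\max\{\lambda\in\mathbb{Z}_{\ge 0}: f(y+\lambda(\chi_i-\chi_j))-f(y)=\lambda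 f'(y;i,j)\}$. $\underline{k}=\min\{x(R):x\in\operatorname{dom} f\}$, $\overline{k}=\max\{x(R):x\in\operatorname{dom} f\}$; for $\underline{k}\le h\le\overline{k}$, $z(h)=\min\{f(x): x(R)=h,\ x\in\operatorname{dom} f\}$ and $M(h)=\{x\in\operatorname{dom} f: x(R)=h,\ f(x)=z(h)\}$. *)

From HB Require Import structures.
From mathcomp Require Import all_boot all_order all_algebra.
From mathcomp Require Import reals constructive_ereal.
Set Implicit Arguments. Unset Strict Implicit. Unset Printing Implicit Defensive.
Import Order.TTheory GRing.Theory Num.Theory.
Local Open Scope ring_scope.
Local Open Scope ereal_scope.

(* Integer points of Z^n are functions 'I_n -> int; N = 'I_n (0-based). *)
Definition vec (n : nat) := 'I_n -> int.

Section Defs.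
Variables (Re : realType) (n : nat).
Implicit Types (x y : vec n) (f : vec n -> \bar Re) (R : {set 'I_n}).

Definition chi (i : 'I_n) : vec n := fun t => ((t == i) : nat)%:Z.

Definition move x (lam : int) (i j : 'I_n) : vec n :=
  fun t => (x t + lam * (chi i t - chi j t))%R.

(* x + chi_i - chi_j  (so x - chi_i + chi_j = exch x j i) *)
Definition exch x (i j : 'I_n) : vec n := fun t => (x t + chi i t - chi j t)%R.

(* f : Z^n -> R \cup {+oo}: values never -oo *)
Definition no_minus_infty f := forall x, f x != -oo.

Definition dom f x : bool := f x < +oo.

Definition Mconvex f :=
  (exists x, dom f x) /\
  forall x y, dom f x -> dom f y -> forall i, (y i < x i)%R ->
    exists2 j, (x j < y j)%R &
      f (exch x j i) + f (exch y i j) <= f x + f y.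

Definition bounded_dom f := exists B : int, forall x, dom f x -> forall t, (`|x t| <= B)%R.

Definition sumR R x : int := (\sum_(i in R) x i)%R.

Definition fder f x i j := f (exch x i j) - f x.

(* phi^R(x) = min_{i in R, j in N\R} f'(x;i,j) (min over an empty family = +oo) *)
Definition phiR f R x : \bar Re :=
  \big[Order.min/+oo]_(i in R) \big[Order.min/+oo]_(j in ~: R) fder f x i j.

Definition inM f R (h : int) x :=
  dom f x /\ sumR R x = h /\
  forall y, dom f y -> sumR R y = h -> f x <= f y.

Definition cbar_prop f y i j (lam : int) :=
  f (move y lam i j) - f y = (lam%:~R)%:E * fder f y i j.
Definition is_cbar f y i j (c : int) :=
  (0 <= c)%R /\ cbar_prop f y i j c /\
  forall lam : int, (0 <= lam)%R -> cbar_prop f y i j lam -> (lam <= c)%R.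

(* Run of ConstM-IncSlope: process the list of pairs (i,j) in order, starting
   from y, with threshold phi0 = phi^R(x); y' is the resulting vector. *)
Fixpoint run f R (k : int) (phi0 : \bar Re) (ps : seq ('I_n * 'I_n)) y (y' : vec n)
  : Prop :=
  match ps with
  | [::] => y' = y
  | (i, j) :: ps' =>
      if fder f y i j == phi0 then
        exists c, is_cbar f y i j c /\
          run f R k phi0 ps' (move y (Num.min (k - sumR R y) c)%R i j) y'
      else run f R k phi0 ps' y y'
  end.

Definition pair_order (sR : seq 'I_n) (sN : 'I_n -> seq 'I_n) :=
  flatten [seq [seq (i, j) | j <- sN i] | i <- sR].

End Defs.

From HB Require Import structures.
From mathcomp Require Import all_boot all_order all_algebra.
From mathcomp Require Import reals constructive_ereal.
From Stdlib Require Import FunctionalExtensionality.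
From mathcomp Require Import zify ring lra.
Set Implicit Arguments. Unset Strict Implicit. Unset Printing Implicit Defensive.
Import Order.TTheory GRing.Theory Num.Theory.
Local Open Scope ring_scope.
Local Open Scope ereal_scope.

(* Let phi = phi^R(x); it is finite since khat < k leaves room for an exchange
   from x that increases x(R).  Tilt f by this slope: g(y) = f(y) - phi y(R).
   Every exchange from x increases g (exchanges preserving x(R) by optimality
   of x on its level, increasing ones by the choice of phi, decreasing ones by
   comparison with an optimal increasing one), so by M-convexity x minimizes g
   and the set S of minimizers of g satisfies the exchange axiom.  For y in S,
   i in R and j outside R, f'(y;i,j) = phi iff y + chi_i - chi_j is in S, and
   cbar(y;i,j) is the longest step in that direction staying in S.  Hence the
   procedure stays in S and, unless it reaches level k, leaves every treated
   pair (i,j) with y + chi_i - chi_j outside S; the exchange axiom of S shows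
   that later steps keep it outside.  At x' no such exchange is optimal for g,
   which means f'(x';i,j) > phi. *)

Section Vectors.
Variable n : nat.
Implicit Types (x y z : vec n) (R : {set 'I_n}).

Lemma chi_id (a : 'I_n) : chi a a = 1%R.
Proof. by rewrite /chi eqxx. Qed.

Lemma chi_neq {a t : 'I_n} : t != a -> chi a t = 0%R.
Proof. by rewrite /chi => /negbTE ->. Qed.

Lemma chi_ge0 (a t : 'I_n) : (0 <= chi a t)%R.
Proof. by rewrite /chi. Qed.

Lemma move0 y i j : move y 0 i j = y.
Proof. by apply: functional_extensionality => t; rewrite /move mul0r addr0. Qed.

Lemma moveS y (c : nat) i j : move y c.+1 i j = exch (move y c i j) i j.
Proof.
by apply: functional_extensionality => t; rewrite /exch /move -addn1 PoszD; ring.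
Qed.

Lemma exch_le y a b t : t != a -> (exch y a b t <= y t)%R.
Proof. by move=> ta; rewrite /exch (chi_neq ta) addr0 gerBl chi_ge0. Qed.

Lemma exch_ge y a b t : t != b -> (y t <= exch y a b t)%R.
Proof. by move=> tb; rewrite /exch (chi_neq tb) subr0 lerDl chi_ge0. Qed.

Lemma exch_gt y a b : a != b -> (y a < exch y a b a)%R.
Proof. by move=> ab; rewrite /exch chi_id (chi_neq ab) subr0 ltrDl. Qed.

Lemma sumR_chi R a : (\sum_(t in R) chi a t)%R = (a \in R)%:Z.
Proof.
rewrite /chi; case: (boolP (a \in R)) => ha.
  by rewrite (bigD1 a) //= eqxx big1 ?addr0 // => t /andP[_ /negbTE ->].
by rewrite big1 // => t ht; case: eqP ht => // ->; rewrite (negbTE ha).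
Qed.

Lemma sumR_exch R y a b :
  sumR R (exch y a b) = (sumR R y + (a \in R)%:Z - (b \in R)%:Z)%R.
Proof. by rewrite /sumR /exch sumrB big_split /= !sumR_chi. Qed.

Lemma sumR_move R y c a b :
  sumR R (move y c a b) = (sumR R y + c * ((a \in R)%:Z - (b \in R)%:Z))%R.
Proof. by rewrite /sumR /move big_split /= -mulr_sumr sumrB !sumR_chi. Qed.

Lemma sumR_move_in_out R y c i j : i \in R -> j \notin R ->
  sumR R (move y c i j) = (sumR R y + c)%R.
Proof. by move=> hi hj; rewrite sumR_move hi (negbTE hj) subr0 mulr1. Qed.

Definition l1dist y z : nat := (\sum_(t : 'I_n) `|y t - z t|%N)%N.

Lemma l1dist_exch_lt y z i j : (z i < y i)%R -> (y j < z j)%R ->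
  (l1dist (exch y j i) z < l1dist y z)%N.
Proof.
move=> hi hj.
have ij : i != j by apply: contraTneq hi => ->; rewrite -leNgt ltW.
rewrite /l1dist (bigD1 i) //= [X in (_ < X)%N](bigD1 i) //= -addSn.
apply: leq_add; first by rewrite /exch chi_id chi_neq //; lia.
apply: leq_sum => t ti; rewrite /exch (chi_neq ti).
by case: (eqVneq t j) => [->|tj]; [rewrite chi_id; lia | rewrite chi_neq // addr0 subr0].
Qed.

End Vectors.

Section PhiR.
Variables (Re : realType) (n : nat) (f : vec n -> \bar Re) (R : {set 'I_n}).

Lemma phiR_le_fder x i j : i \in R -> j \notin R -> phiR f R x <= fder f x i j.
Proof.
move=> hi hj; apply: le_trans (bigmin_le_cond _ _ hi) _.
by apply: bigmin_le_cond; rewrite in_setC.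
Qed.

Lemma phiR_attained x : phiR f R x < +oo ->
  exists i0 j0, [/\ i0 \in R, j0 \notin R & phiR f R x = fder f x i0 j0].
Proof.
rewrite /phiR => fin.
have [i1 hi1|R0] := pickP (mem R); last by move: fin; rewrite big_pred0 ?ltxx.
have [i0 hi0 e0] := eq_bigmin i1 (fun i => i \in R)
  (fun i => \big[Order.min/+oo]_(j in ~: R) fder f x i j) hi1 (fun _ _ => leey _).
rewrite e0 in fin *.
have [j1 hj1|C0] := pickP (mem (~: R)); last by move: fin; rewrite big_pred0 ?ltxx.
have [j0 hj0 ->] := eq_bigmin j1 (fun j => j \in ~: R) (fder f x i0)
  hj1 (fun _ _ => leey _).
by exists i0, j0; split; rewrite // -in_setC.
Qed.

End PhiR.

Section RunBasics.
Variables (Re : realType) (n : nat) (f : vec n -> \bar Re) (R : {set 'I_n}).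
Variables (k : int) (phi0 : \bar Re).

Definition crossing (p : 'I_n * 'I_n) := (p.1 \in R) && (p.2 \notin R).

Lemma all_crossing_pair_order sR sN : perm_eq sR (enum R) ->
  (forall i, i \in R -> perm_eq (sN i) (enum (~: R))) ->
  all crossing (pair_order sR sN).
Proof.
move=> psR psN; apply/allP => p /flatten_mapP [i iin /mapP [j jin ->]].
rewrite (perm_mem psR) mem_enum in iin.
by rewrite (perm_mem (psN i iin)) mem_enum in_setC in jin; rewrite /crossing iin.
Qed.

Lemma run_cat l1 l2 y y' : run f R k phi0 (l1 ++ l2) y y' ->
  exists ym, run f R k phi0 l1 y ym /\ run f R k phi0 l2 ym y'.
Proof.
elim: l1 y => [|[i j] l1 IH] y /=; first by exists y.
case: (fder f y i j == phi0) => [[c [hc /IH [ym [h1 h2]]]]|/IH [ym [h1 h2]]];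
  by exists ym; split => //; exists c.
Qed.

Lemma run_sumR_le ps y y' : run f R k phi0 ps y y' -> all crossing ps ->
  (sumR R y <= k)%R -> (sumR R y <= sumR R y' <= k)%R.
Proof.
elim: ps y => [|[i j] ps IH] y /=; first by move=> -> _ ->; rewrite lexx.
move=> hr /andP[/andP[/= hi hj] hps] hs.
case: (fder f y i j == phi0) hr => [[c [[c0 _] hr]]|hr]; last exact: IH hr hps hs.
move: (IH _ hr hps); rewrite sumR_move_in_out // => h.
have h1 : (0 <= Num.min (k - sumR R y) c)%R by rewrite le_min subr_ge0 hs.
have h2 : (Num.min (k - sumR R y) c <= k - sumR R y)%R by rewrite ge_min lexx.
move: (Num.min _ _) h1 h2 h => m h1 h2 h.
have /andP[h3 h4] : (sumR R y + m <= sumR R y' <= k)%R by apply: h; lia.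
by apply/andP; split; lia.
Qed.

End RunBasics.

Section MConvex.
Variables (Re : realType) (n : nat) (f : vec n -> \bar Re) (R : {set 'I_n}).
Hypothesis f_real : no_minus_infty f.
Hypothesis f_Mconvex : Mconvex f.
Implicit Types (x y z : vec n).

Definition fval y : Re := fine (f y).

Lemma fvalE {y} : dom f y -> f y = (fval y)%:E.
Proof. by rewrite /dom /fval; have := f_real y; case: (f y). Qed.

Lemma notdom_pinfty {y} : ~~ dom f y -> f y = +oo.
Proof. by rewrite /dom; have := f_real y; case: (f y) => [r||] //=; rewrite ltry. Qed.

Lemma fderE y i j : dom f y -> dom f (exch y i j) ->
  fder f y i j = (fval (exch y i j) - fval y)%:E.
Proof. by move=> dy de; rewrite /fder (fvalE dy) (fvalE de). Qed.

Lemma Mconvex_exchange y z i : dom f z -> dom f y -> (y i < z i)%R ->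
  exists2 l, (z l < y l)%R & [/\ dom f (exch z l i), dom f (exch y i l) &
    (fval (exch z l i) + fval (exch y i l) <= fval z + fval y)%R].
Proof.
move=> dz dy hi; have [l hl hle] := f_Mconvex.2 z y dz dy i hi.
exists l => //; move: hle; rewrite (fvalE dz) (fvalE dy) /dom /fval.
have := f_real (exch z l i); have := f_real (exch y i l).
case: (f (exch z l i)) => [a| |]; case: (f (exch y i l)) => [b| |] //=;
  by rewrite ?lee_fin ?ltry.
Qed.

Lemma exists_dom_exch_in_out x z : dom f x -> dom f z -> (sumR R x < sumR R z)%R ->
  exists i j, [/\ i \in R, j \notin R & dom f (exch x i j)].
Proof.
move=> dx dz; have [m] := ubnP (l1dist z x); elim: m z dz => // m IH z dz hd hlt.
have [i /andP[hiR hi] | ] := pickP [pred i | (i \in R) && (x i < z i)%R]; last first.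
  move=> hn; move: hlt; rewrite ltNge => /negP; case; apply: ler_sum => t ht.
  by have /= := hn t; rewrite ht /= => /negbT; rewrite -leNgt.
have [j hj [dzj dxj _]] := Mconvex_exchange dz dx hi.
case: (boolP (j \in R)) => hjR; last by exists i, j.
apply: (IH (exch z j i)) => //; first exact: leq_trans (l1dist_exch_lt hi hj) hd.
by rewrite sumR_exch hjR hiR addrK.
Qed.

Lemma fder_EFin y i j (r : Re) : dom f y -> fder f y i j = r%:E ->
  dom f (exch y i j) /\ (fval (exch y i j) - fval y)%R = r.
Proof.
move=> dy; case: (boolP (dom f (exch y i j))) => de; last first.
  by rewrite /fder (notdom_pinfty de) (fvalE dy).
by rewrite fderE // => -[].
Qed.

Lemma phiR_fin x : dom f x -> phiR f R x < +oo -> exists ph : Re, phiR f R x = ph%:E.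
Proof.
move=> dx fin; have [i0 [j0 [_ _ e]]] := phiR_attained fin.
move: fin; rewrite e /fder (fvalE dx); have := f_real (exch x i0 j0).
by case: (f (exch x i0 j0)) => [r||] // _ _; exists (r - fval x)%R.
Qed.

Section Tilt.
Variables (x : vec n) (khat : int) (ph : Re).
Hypothesis x_min : inM f R khat x.
Hypothesis phiR_x : phiR f R x = ph%:E.

Lemma fval_min y : dom f y -> sumR R y = khat -> (fval x <= fval y)%R.
Proof.
case: x_min => dx [_ hm] dy sy.
by have := hm y dy sy; rewrite (fvalE dx) (fvalE dy) lee_fin.
Qed.

Lemma ph_le_fval i j : i \in R -> j \notin R -> dom f (exch x i j) ->
  (ph <= fval (exch x i j) - fval x)%R.
Proof.
move=> hi hj de; have := phiR_le_fder f x hi hj.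
by rewrite phiR_x (fderE (proj1 x_min) de) lee_fin.
Qed.

Lemma ph_attained : exists i0 j0,
  [/\ i0 \in R, j0 \notin R, dom f (exch x i0 j0) & fval (exch x i0 j0) - fval x = ph]%R.
Proof.
have [i0 [j0 [hi0 hj0 e]]] : exists i0 j0,
    [/\ i0 \in R, j0 \notin R & phiR f R x = fder f x i0 j0].
  by apply: phiR_attained; rewrite phiR_x ltry.
rewrite phiR_x in e; have [de ee] := fder_EFin (proj1 x_min) (esym e).
by exists i0, j0.
Qed.

(* Compare with an optimal increasing exchange of [x]: the exchange axiom
   produces two vectors on level [khat]. *)
Lemma fval_exch_out_in a b : a \notin R -> b \in R -> dom f (exch x a b) ->
  (fval x - ph <= fval (exch x a b))%R.
Proof.
move=> ha hb de; have [dx [sx _]] := x_min.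
have [i0 [j0 [hi0 hj0 d0 e0]]] := ph_attained.
have hlt : (exch x a b i0 < exch x i0 j0 i0)%R.
  have i0a : i0 != a by apply: contraNneq ha => <-.
  have i0j0 : i0 != j0 by apply: contraNneq hj0 => <-.
  exact: le_lt_trans (exch_le _ _ i0a) (exch_gt _ i0j0).
have [l hl [d1 d2 hle]] := Mconvex_exchange d0 de hlt.
have lR : l \notin R.
  apply: contraTN hl => lR; rewrite -leNgt.
  have la : l != a by apply: contraNneq ha => <-.
  have lj0 : l != j0 by apply: contraNneq hj0 => <-.
  exact: le_trans (exch_le _ _ la) (exch_ge _ _ lj0).
have m1 : (fval x <= fval (exch (exch x i0 j0) l i0))%R.
  by apply: fval_min d1 _; rewrite !sumR_exch hi0 (negbTE hj0) (negbTE lR) sx /=; ring.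
have m2 : (fval x <= fval (exch (exch x a b) i0 l))%R.
  by apply: fval_min d2 _; rewrite !sumR_exch hi0 hb (negbTE ha) (negbTE lR) sx /=; ring.
lra.
Qed.

Definition tilt y : Re := (fval y - ph * (sumR R y)%:~R)%R.

Lemma tilt_exch_ge a b : dom f (exch x a b) -> (tilt x <= tilt (exch x a b))%R.
Proof.
move=> de; have [dx [sx _]] := x_min; rewrite /tilt sumR_exch.
case: (boolP (a \in R)) => ha; case: (boolP (b \in R)) => hb /=.
- by rewrite addrK lerD2r; apply: fval_min de _; rewrite sumR_exch ha hb addrK.
- by have := ph_le_fval ha hb de; rewrite subr0 intrD mulrDr mulr1; lra.
- by have := fval_exch_out_in ha hb de; rewrite addr0 intrB mulrBr mulr1; lra.
- rewrite addr0 subr0 lerD2r; apply: fval_min de _.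
  by rewrite sumR_exch (negbTE ha) (negbTE hb) addr0 subr0.
Qed.

Lemma tilt_exchange y z i : dom f z -> dom f y -> (y i < z i)%R ->
  exists2 l, (z l < y l)%R & [/\ dom f (exch z l i), dom f (exch y i l) &
    (tilt (exch z l i) + tilt (exch y i l) <= tilt z + tilt y)%R].
Proof.
move=> dz dy hi; have [l hl [d1 d2 hle]] := Mconvex_exchange dz dy hi.
exists l => //; split => //.
have hs : (sumR R (exch z l i) + sumR R (exch y i l) = sumR R z + sumR R y)%R.
  by rewrite !sumR_exch; ring.
have := congr1 (fun s : int => ph * s%:~R)%R hs; rewrite /= !intrD !mulrDr /tilt.
lra.
Qed.

Lemma tilt_min y : dom f y -> (tilt x <= tilt y)%R.
Proof.
have [dx _] := x_min.
move=> dy; have [m] := ubnP (l1dist y x); elim: m y dy => // m IH y dy hd.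
case: (pickP (fun t => y t != x t)) => [t ht | heq]; last first.
  suff -> : y = x by [].
  by apply: functional_extensionality => t; move/negbFE: (heq t) => /eqP.
have [i hi] : exists i, (x i < y i)%R.
  case: (ltgtP (y t) (x t)) ht => [ytx|xty|//] _; last by exists t.
  by have [j hj _] := f_Mconvex.2 x y dx dy t ytx; exists j.
have [j hj [d1 d2 hle]] := tilt_exchange dy dx hi.
have := IH _ d1 (leq_trans (l1dist_exch_lt hi hj) hd).
by have := tilt_exch_ge d2; lra.
Qed.

Definition argmin_tilt y := dom f y /\ tilt y = tilt x.

Lemma argmin_exchange y z i : argmin_tilt y -> argmin_tilt z -> (y i < z i)%R ->
  exists2 l, (z l < y l)%R & argmin_tilt (exch z l i) /\ argmin_tilt (exch y i l).
Proof.
move=> [dy ey] [dz ez] hi; have [l hl [d1 d2 hle]] := tilt_exchange dz dy hi.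
have m1 := tilt_min d1; have m2 := tilt_min d2.
by exists l => //; split; split => //; apply/eqP; rewrite eq_le; apply/andP; split; lra.
Qed.

Lemma argmin_exchE y i j : argmin_tilt y -> i \in R -> j \notin R ->
  argmin_tilt (exch y i j) <-> fder f y i j = ph%:E.
Proof.
move=> [dy ey] hi hj.
have hs : sumR R (exch y i j) = (sumR R y + 1)%R.
  by rewrite sumR_exch hi (negbTE hj) subr0.
rewrite /tilt in ey.
split => [[de ee] | hf].
- by rewrite fderE //; congr EFin; move: ee; rewrite /tilt hs intrD mulrDr mulr1; lra.
- have [de ee] := fder_EFin dy hf; split => //.
  by rewrite /tilt hs intrD mulrDr mulr1; lra.
Qed.

Lemma cbar_propE y i j (c : int) : argmin_tilt y -> i \in R -> j \notin R ->
  fder f y i j = ph%:E -> cbar_prop f y i j c <-> argmin_tilt (move y c i j).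
Proof.
move=> [dy ey] hi hj hf; rewrite /cbar_prop hf -EFinM mulrC (fvalE dy).
have hs := sumR_move_in_out y c hi hj.
rewrite /tilt in ey.
case: (boolP (dom f (move y c i j))) => dm; last first.
  by rewrite (notdom_pinfty dm); split => [//|[dm']]; rewrite dm' in dm.
rewrite (fvalE dm) -EFinB; split => [[e] | [_ e]]; [split => // | congr EFin];
  move: e; rewrite /tilt hs intrD mulrDr; lra.
Qed.

Definition blocked y i (J : 'I_n -> Prop) := forall j, J j -> ~ argmin_tilt (exch y i j).

(* By induction on [c]: exchanging [exch (move y c.+1 i' j') i j] with [y]
   yields an optimal exchange [exch y i l] with [J l], or, when [i' = i] and
   [l = j'], the optimal exchange [exch (move y c i j') i j]. *)
Lemma blocked_move y i i' j' (J : 'I_n -> Prop) (c : nat) : argmin_tilt y ->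
  i \in R -> j' \notin R -> (forall j, J j -> j \notin R) -> i' = i \/ J j' ->
  blocked y i J -> blocked (move y c i' j') i J.
Proof.
move=> Ay hi hj' JR hi'J hB; elim: c => [|c IH]; first by rewrite move0.
move=> j Jj Aw.
have ij : i != j by apply: contraNneq (JR j Jj) => <-.
have ij' : i != j' by apply: contraNneq hj' => <-.
have hlt : (y i < exch (move y c.+1 i' j') i j i)%R.
  rewrite /exch /move chi_id (chi_neq ij) (chi_neq ij').
  by have := chi_ge0 i' i; nia.
have [l hl [A1 A2]] := argmin_exchange Ay Aw hlt.
have [elj|lj] := eqVneq l j; first by apply: (hB j Jj); rewrite -elj.
have [elj'|lj'] := eqVneq l j'; last first.
  move: hl; rewrite /exch /move (chi_neq lj) (chi_neq lj').
  by have := chi_ge0 i' l; have := chi_ge0 i l; nia.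
subst l; case: hi'J => [ei|Jj']; last exact: (hB j' Jj').
subst i'; apply: (IH j Jj).
suff -> : exch (move y c i j') i j = exch (exch (move y c.+1 i j') i j) j' i by [].
by rewrite moveS; apply: functional_extensionality => t; rewrite /exch; ring.
Qed.

Lemma phiR_gt_of_blocked y : argmin_tilt y ->
  (forall i j, i \in R -> j \notin R -> ~ argmin_tilt (exch y i j)) ->
  ph%:E < phiR f R y.
Proof.
move=> [dy ey] hB; rewrite /phiR; apply: lt_bigmin => [|i hi]; first exact: ltry.
apply: lt_bigmin => [|j]; first exact: ltry.
rewrite in_setC => hj.
case: (boolP (dom f (exch y i j))) => de.
  rewrite fderE // lte_fin.
  have : (tilt x < tilt (exch y i j))%R.
    by rewrite lt_neqAle tilt_min // andbT; apply/eqP => e; apply: (hB i j hi hj).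
  by move: ey; rewrite /tilt sumR_exch hi (negbTE hj) subr0 intrD mulrDr mulr1; lra.
by rewrite /fder (notdom_pinfty de) (fvalE dy) addye ?ltry.
Qed.

Section Run.
Variable k : int.
Local Notation run := (run f R k ph%:E).

Lemma run_step i j ps y y' : run ((i, j) :: ps) y y' -> i \in R -> j \notin R ->
  all (crossing R) ps -> argmin_tilt y -> (sumR R y <= k)%R -> (sumR R y' < k)%R ->
  exists c : nat, [/\ run ps (move y c i j) y', argmin_tilt (move y c i j),
    ~ argmin_tilt (exch (move y c i j) i j) & (sumR R (move y c i j) <= k)%R].
Proof.
move=> /= hr hi hj hps Ay hs hs'.
case: eqP hr => [hf [c [[c0 [cp cmax]] hr]] | hf hr]; last first.
  exists 0%N; rewrite move0; split => // /argmin_exchE.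
  by move=> /(_ Ay hi hj).
case: c c0 cp cmax hr => // c _ cp cmax hr.
have ck : (c%:Z <= k - sumR R y)%R.
  (* otherwise this step reaches level [k], and the rest of the run cannot go back *)
  rewrite leNgt; apply/negP => ck; move: hr; rewrite min_l ?ltW // => hr.
  have hk : sumR R (move y (k - sumR R y) i j) = k.
    by rewrite sumR_move_in_out // addrC subrK.
  have := run_sumR_le hr hps; rewrite hk lexx => /(_ isT) /andP[hle _].
  by move: (lt_le_trans hs' hle); rewrite ltxx.
rewrite min_r // in hr; exists c; split => //.
- exact/(cbar_propE _ Ay hi hj hf).
- rewrite -moveS => /(cbar_propE _ Ay hi hj hf) /(cmax c.+1 isT).
  by rewrite lez_nat ltnn.
- by rewrite sumR_move_in_out //; move: ck; rewrite lerBrDl addrC.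
Qed.

Lemma run_argmin ps y y' : run ps y y' -> all (crossing R) ps -> argmin_tilt y ->
  (sumR R y <= k)%R -> (sumR R y' < k)%R -> argmin_tilt y'.
Proof.
elim: ps y => [|[i j] ps IH] y; first by move=> /= ->.
move=> hr /andP[/andP[/= hi hj] hps] Ay hs hs'.
have [c [hr1 A1 _ s1]] := run_step hr hi hj hps Ay hs hs'.
exact: IH hr1 hps A1 s1 hs'.
Qed.

Lemma run_blocked ps y y' i (J : 'I_n -> Prop) : run ps y y' -> all (crossing R) ps ->
  argmin_tilt y -> (sumR R y <= k)%R -> (sumR R y' < k)%R -> i \in R ->
  (forall j, J j -> j \notin R) -> (forall p, p \in ps -> p.1 = i \/ J p.2) ->
  blocked y i J -> blocked y' i (fun j => J j \/ (i, j) \in ps).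
Proof.
elim: ps y J => [|[i' j'] ps IH] y J; first by move=> /= -> _ _ _ _ _ _ _ hB j [/hB|].
move=> hr /andP[/andP[/= hi' hj'] hps] Ay hs hs' hi JR hpsJ hB.
have [c [hr1 A1 nA1 s1]] := run_step hr hi' hj' hps Ay hs hs'.
pose J1 j := J j \/ (i, j) = (i', j').
have hB1 : blocked (move y c i' j') i J1.
  move=> j [Jj|[-> ->] //].
  exact: blocked_move Ay hi hj' JR (hpsJ _ (mem_head _ _)) hB _ Jj.
have J1R j : J1 j -> j \notin R by case=> [/JR|[_ ->]].
have hpsJ1 p : p \in ps -> p.1 = i \/ J1 p.2.
  by move=> hp; case: (hpsJ p); rewrite ?in_cons ?hp ?orbT //; [left|right; left].
move=> j Hj; apply: (IH _ J1 hr1 hps A1 s1 hs' hi J1R hpsJ1 hB1).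
case: Hj => [Jj|]; first by left; left.
by rewrite in_cons => /orP[/eqP e|hin]; [left; right|right].
Qed.

Lemma run_pair_order_blocked sR sN y' : perm_eq sR (enum R) ->
  (forall i, i \in R -> perm_eq (sN i) (enum (~: R))) ->
  run (pair_order sR sN) x y' -> (khat <= k)%R -> (sumR R y' < k)%R ->
  forall i j, i \in R -> j \notin R -> ~ argmin_tilt (exch y' i j).
Proof.
move=> psR psN hr hk hs' i0 j hi0 hj.
have [dx [sx _]] := x_min; have Ax : argmin_tilt x by [].
have sxk : (sumR R x <= k)%R by rewrite sx.
have hps := all_crossing_pair_order psR psN.
have hin : i0 \in sR by rewrite (perm_mem psR) mem_enum.
move: hr hps; case/splitPr: hin => s1 s2.
set block := [seq (i0, j) | j <- sN i0].
rewrite /pair_order map_cat flatten_cat /= !all_cat => hr /and3P[hps1 hps2 hps3].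
have [y1 [r1 /run_cat [y2 [r2 r3]]]] := run_cat hr.
have /andP[_ s1k] := run_sumR_le r1 hps1 sxk.
have /andP[s1y2 s2k] := run_sumR_le r2 hps2 s1k.
have /andP[s2y' _] := run_sumR_le r3 hps3 s2k.
have s2k' := le_lt_trans s2y' hs'; have s1k' := le_lt_trans s1y2 s2k'.
have A1 := run_argmin r1 hps1 Ax sxk s1k'.
have A2 := run_argmin r2 hps2 A1 s1k s2k'.
have inblock j' : j' \notin R -> (i0, j') \in block.
  by move=> hj'; apply: map_f; rewrite (perm_mem (psN i0 hi0)) mem_enum in_setC.
have B2 : blocked y2 i0 (fun j' => j' \notin R).
  move=> j' /inblock hb.
  apply: (run_blocked (J := fun _ => False) r2 hps2 A1 s1k s2k' hi0) => //; last by right.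
  by move=> p /mapP [j'' _ ->]; left.
apply: (run_blocked r3 hps3 A2 s2k hs' hi0 (fun _ h => h) _ B2); last by left.
by move=> p hp; right; move/allP: hps3 => /(_ p hp) /andP[].
Qed.

Lemma run_phiR_gt sR sN y' : perm_eq sR (enum R) ->
  (forall i, i \in R -> perm_eq (sN i) (enum (~: R))) ->
  run (pair_order sR sN) x y' -> (khat <= k)%R -> (sumR R y' < k)%R ->
  ph%:E < phiR f R y'.
Proof.
move=> psR psN hr hk hs'; have [dx [sx _]] := x_min.
apply: phiR_gt_of_blocked (run_pair_order_blocked psR psN hr hk hs').
have Ax : argmin_tilt x by split.
have sxk : (sumR R x <= k)%R by rewrite sx.
exact: (run_argmin hr (all_crossing_pair_order psR psN) Ax sxk hs').
Qed.

End Run.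

End Tilt.
End MConvex.

Theorem mainTheorem12 (Re : realType) (n : nat) (f : vec n -> \bar Re)
    (R : {set 'I_n}) (k khat : int) (x : vec n)
    (sR : seq 'I_n) (sN : 'I_n -> seq 'I_n) (x' : vec n) :
  no_minus_infty f -> Mconvex f -> bounded_dom f ->
  R != set0 -> R != [set: 'I_n] ->
  (exists z, dom f z /\ (sumR R z <= k)%R) ->
  (exists z, dom f z /\ (k <= sumR R z)%R) ->
  (khat < k)%R -> inM f R khat x ->
  perm_eq sR (enum R) -> (forall i, i \in R -> perm_eq (sN i) (enum (~: R))) ->
  run f R k (phiR f R x) (pair_order sR sN) x x' ->
  (sumR R x' < k)%R ->
  phiR f R x < phiR f R x'.
Proof.
move=> f_real f_Mconvex _ _ _ _ [z [dz hz]] hk x_min psR psN hrun hx'.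
have [dx [sx _]] := x_min.
have [i1 [j1 [hi1 hj1 d1]]] : exists i j, [/\ i \in R, j \notin R & dom f (exch x i j)].
  apply: (exists_dom_exch_in_out (R := R) f_real f_Mconvex dx dz).
  by rewrite sx (lt_le_trans hk hz).
have [ph phiR_x] : exists ph, phiR f R x = ph%:E.
  apply: (phiR_fin (R := R) f_real dx); apply: le_lt_trans (phiR_le_fder f x hi1 hj1) _.
  by rewrite (fderE f_real dx d1) ltry.
rewrite phiR_x in hrun *.
exact: (run_phiR_gt f_real f_Mconvex x_min phiR_x psR psN hrun (ltW hk) hx').
Qed.
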